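(* Let $c\in\mathsf{ACirc}[n,m]$. Then $[\![c]\!]=\{(p,f(p)):p\in k(x)^n\}$ for some rational affine map $f:k(x)^n\to k(x)^m$ if and only if there exists an affine signal flow graph $g$ of sort $(n,m)$ such that $[\![g]\!]=[\![c]\!]$.
   Context: Fix a field $k$; $k(x)$ is the field of polynomial fractions. Circuits: terms built from generators with sorts $(n,m)$: copier $\Delta:(1,2)$, discard $!:(1,0)$, amplifier $\mathsf{s}_r:(1,1)$ ($r\in k$), register $\mathsf{x}:(1,1)$, adder $+:(2,1)$, zero $0:(0,1)$, one $\mathbf{1}:(0,1)$; mirror images $\Delta^{op}:(2,1)$, $!^{op}:(0,1)$, $\mathsf{s}_r^{op}$, $\mathsf{x}^{op}:(1,1)$, $+^{op}:(1,2)$, $0^{op}:(1,0)$, $\mathbf{1}^{op}:(1,0)$; $\mathrm{id}_0:(0,0),\mathrm{id}_1:(1,1),\mathrm{sw}:(2,2)$; closed under $;$ and $\oplus$; $\mathsf{ACirc}[n,m]$: circuits of sort $(n,m)$. Denotation: $[\![\Delta]\!]=\{(p,(p,p))\}$, $[\![!]\!]=\{(p,\bullet)\}$, $[\![+]\!]=\{((p,q),p+q)\}$, $[\![0]\!]=\{(\bullet,0)\}$, $[\![\mathbf 1]\!]=\{(\bullet,1)\}$, $[\![\mathsf s_r]\!]=\{(p,rp)\}$, $[\![\mathsf x]\!]=\{(p,px)\}$; mirrored generators denote converse relations; structural ones identity, swap, $\{(\bullet,\bullet)\}$; $;$ relational composition, $\oplus$ product. Feedback: for $c:(n+1,m+1)$,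 $\mathrm{Tr}(c):(n,m)$ connects the last right port of $c$ to its last left port through a register $\mathsf x$, bending the wire with the cup $!^{op};\Delta:(0,2)$ and the cap $\Delta^{op};!:(2,0)$. Affine signal flow graphs: smallest class containing $\Delta,!,\mathsf s_r,\mathsf x,+,0,\mathbf 1,\mathrm{id}_0,\mathrm{id}_1,\mathrm{sw}$ and closed under $;$, $\oplus$, $\mathrm{Tr}$. $\mathsf{Rat}\subseteq k(x)$: fractions $p/q$ with $q$ having nonzero constant term. An affine map $f(p)=Ap+b$ is rational if $A$ and $b$ have all entries in $\mathsf{Rat}$. *)

From HB Require Import structures.
From mathcomp Require Import all_boot all_order all_algebra.
From mathcomp Require Import fraction.
Set Implicit Arguments. Unset Strict Implicit. Unset Printing Implicit Defensive.
Import Order.TTheory GRing.Theory Num.Theory.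
Local Open Scope ring_scope.

Notation "x %:F" := (@FracField.tofrac _ x).

Definition kx (k : fieldType) : fieldType := {fraction {poly k}}.

Definition kx_const (k : fieldType) (r : k) : kx k := (r%:P)%:F.
Definition kx_x (k : fieldType) : kx k := ('X : {poly k})%:F.

Definition ratp (k : fieldType) (f : kx k) : Prop :=
  exists p q : {poly k}, q.[0] != 0 /\ f = p%:F / q%:F.

Inductive circ (k : Type) : nat -> nat -> Type :=
| Copy : circ k 1 2
| Disc : circ k 1 0
| Amp : k -> circ k 1 1
| Reg : circ k 1 1
| Add : circ k 2 1
| Zero : circ k 0 1
| One : circ k 0 1
| CopyOp : circ k 2 1
| DiscOp : circ k 0 1
| AmpOp : k -> circ k 1 1
| RegOp : circ k 1 1
| AddOp : circ k 1 2
| ZeroOp : circ k 1 0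
| OneOp : circ k 1 0
| Id0 : circ k 0 0
| Id1 : circ k 1 1
| Sw : circ k 2 2
| Seq : forall n m l, circ k n m -> circ k m l -> circ k n l
| Par : forall n1 m1 n2 m2, circ k n1 m1 -> circ k n2 m2 -> circ k (n1 + n2) (m1 + m2).

Arguments Copy {k}. Arguments Disc {k}. Arguments Amp {k}. Arguments Reg {k}.
Arguments Add {k}. Arguments Zero {k}. Arguments One {k}. Arguments CopyOp {k}.
Arguments DiscOp {k}. Arguments AmpOp {k}. Arguments RegOp {k}. Arguments AddOp {k}.
Arguments ZeroOp {k}. Arguments OneOp {k}. Arguments Id0 {k}. Arguments Id1 {k}.
Arguments Sw {k}. Arguments Seq {k n m l}. Arguments Par {k n1 m1 n2 m2}.

Section Gens.
Variable k : fieldType.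
Local Notation F := (kx k).
Definition rel_copy (p : 'cV[F]_1) (q : 'cV[F]_2) := q = const_mx (p ord0 ord0).
Definition rel_disc (p : 'cV[F]_1) (q : 'cV[F]_0) := True.
Definition rel_amp (r : k) (p q : 'cV[F]_1) := q = kx_const r *: p.
Definition rel_reg (p q : 'cV[F]_1) := q = kx_x k *: p.
Definition rel_add (p : 'cV[F]_2) (q : 'cV[F]_1) :=
  q = const_mx (p ord0 ord0 + p ord_max ord0).
Definition rel_zero (p : 'cV[F]_0) (q : 'cV[F]_1) := q = 0.
Definition rel_one (p : 'cV[F]_0) (q : 'cV[F]_1) := q = const_mx 1.
Definition rel_sw (p q : 'cV[F]_2) := q = \col_(i < 2) p (rev_ord i) ord0.
End Gens.

Fixpoint sem (k : fieldType) n m (c : circ k n m) : 'cV[kx k]_n -> 'cV[kx k]_m -> Prop :=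
  match c in circ _ n m return 'cV[kx k]_n -> 'cV[kx k]_m -> Prop with
  | Copy => @rel_copy k
  | Disc => @rel_disc k
  | Amp r => rel_amp r
  | Reg => @rel_reg k
  | Add => @rel_add k
  | Zero => @rel_zero k
  | One => @rel_one k
  | CopyOp => fun p q => rel_copy q p
  | DiscOp => fun p q => rel_disc q p
  | AmpOp r => fun p q => rel_amp r q p
  | RegOp => fun p q => rel_reg q p
  | AddOp => fun p q => rel_add q p
  | ZeroOp => fun p q => rel_zero q p
  | OneOp => fun p q => rel_one q p
  | Id0 => fun p q => p = q
  | Id1 => fun p q => p = q
  | Sw => @rel_sw k
  | Seq _ _ _ c1 c2 => fun p q => exists y, sem c1 p y /\ sem c2 y q
  | Par _ _ _ _ c1 c2 => fun p q =>
      sem c1 (usubmx p) (usubmx q) /\ sem c2 (dsubmx p) (dsubmx q)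
  end.

Definition castc (k : Type) n m n' m' (e1 : n = n') (e2 : m = m') (c : circ k n m)
  : circ k n' m' :=
  match e1 in _ = a, e2 in _ = b return circ k a b with erefl, erefl => c end.

Definition cup {k : Type} : circ k 0 2 := Seq DiscOp Copy.
Definition cap {k : Type} : circ k 2 0 := Seq CopyOp Disc.

Fixpoint idn (k : Type) (n : nat) : circ k n n :=
  match n return circ k n n with
  | 0 => Id0
  | n'.+1 => Par Id1 (idn k n')
  end.

(* Tr(c) = (id_n + cup) ; (c + id_1) ; (id_m + x + id_1) ; (id_m + cap) *)
Definition trace (k : Type) n m (c : circ k (n + 1) (m + 1)) : circ k n m :=
  Seq (castc (addn0 n) (erefl (n + 2)) (Par (idn k n) cup))
  (Seq (castc (esym (addnA n 1 1)) (esym (addnA m 1 1)) (Par c Id1))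
  (Seq (Par (idn k m) (Par Reg Id1))
       (castc (erefl (m + 2)) (addn0 m) (Par (idn k m) cap)))).

Inductive asfg (k : Type) : forall n m, circ k n m -> Prop :=
| asfg_copy : asfg Copy
| asfg_disc : asfg Disc
| asfg_amp r : asfg (Amp r)
| asfg_reg : asfg Reg
| asfg_add : asfg Add
| asfg_zero : asfg Zero
| asfg_one : asfg One
| asfg_id0 : asfg Id0
| asfg_id1 : asfg Id1
| asfg_sw : asfg Sw
| asfg_seq n m l (c : circ k n m) (d : circ k m l) :
    asfg c -> asfg d -> asfg (Seq c d)
| asfg_par n1 m1 n2 m2 (c : circ k n1 m1) (d : circ k n2 m2) :
    asfg c -> asfg d -> asfg (Par c d)
| asfg_tr n m (c : circ k (n + 1) (m + 1)) : asfg c -> asfg (trace c).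

(* The generators are
   rational affine, [;] and [+] compose and stack rational affine maps, and the
   trace of [(p, y) |-> (q, z)] is solved by the loop equation [z = w + x a z],
   i.e. [z = (1 - x a)^-1 w]; the denominator of [1 - x a] has the same
   constant term as that of [a], so the solution stays in [Rat].
   Conversely, multiplication by a polynomial is built by Horner's scheme from
   copiers, registers, amplifiers and adders, and multiplication by [1 / Q],
   where [Q = Q(0) (1 - x a)], is the trace of a loop whose body multiplies by
   the polynomial [a]. A rational affine map is then assembled column by
   column from such scalings, constants, copiers, adders and swaps. *)

From mathcomp Require Import all_boot all_order all_algebra.
From mathcomp Require Import fraction ring.
Set Implicit Arguments. Unset Strict Implicit. Unset Printing Implicit Defensive.
Import GRing.Theory.
Local Open Scope ring_scope.

Lemma feedbackP {G : fieldType} {x a w z : G} : 1 - x * a != 0 ->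
  z = w + x * a * z <-> z = (1 - x * a)^-1 * w.
Proof.
move=> nz; split=> [zE|->]; last by field.
by rewrite -[w](addrK (x * a * z)) -zE; field.
Qed.

Lemma cV1P (R : Type) (u v : 'cV[R]_1) : u = v <-> u 0 0 = v 0 0.
Proof. by split=> [->//|uv]; apply/matrixP => i j; rewrite !ord1. Qed.

Lemma mulmx_cV1 (R : comPzSemiRingType) m (M : 'M[R]_(m, 1)) (v : 'cV[R]_1) :
  M *m v = v 0 0 *: M.
Proof. by rewrite {1}[v]mx11_scalar mul_mx_scalar. Qed.

Lemma col_mx_cV1 (R : Type) (t : 'cV[R]_1) : col_mx t t = const_mx (t 0 0) :> 'cV_2.
Proof. by apply/matrixP => i j; rewrite !mxE; case: split => l; rewrite !ord1. Qed.

Lemma col_mx1A (R : Type) n (u u' : 'cV[R]_1) (w : 'cV[R]_n) :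
  col_mx (col_mx u u') w = col_mx u (col_mx u' w) :> 'cV_(1 + (1 + n)).
Proof. by rewrite col_mxA castmx_id. Qed.

Lemma castmx_col_mxA (R : Type) m1 m2 m3 (e : (m1 + (m2 + m3) = m1 + m2 + m3)%N)
    (A1 : 'cV[R]_m1) (A2 : 'cV[R]_m2) (A3 : 'cV[R]_m3) :
  castmx (e, erefl) (col_mx A1 (col_mx A2 A3)) = col_mx (col_mx A1 A2) A3.
Proof. by rewrite col_mxA castmx_comp castmx_id. Qed.

Lemma usubmx_cast_addn0 (R : Type) n (p : 'cV[R]_n) :
  usubmx (castmx (esym (addn0 n), erefl) p : 'cV_(n + 0)) = p.
Proof. by apply/matrixP => i j; rewrite mxE castmxE; congr (p _ _); apply: val_inj. Qed.

Section RationalFractions.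
Variable k : fieldType.
Local Notation F := (kx k).
Local Notation x := (kx_x k).
Local Notation ratp := (@ratp k).

Lemma tofrac_horner0_neq0 (Q : {poly k}) : Q.[0] != 0 -> (Q%:F : F) != 0.
Proof. by move=> Q0; rewrite tofrac_eq0; apply: contraNneq Q0 => ->; rewrite horner0. Qed.

Lemma horner0_factor (Q : {poly k}) : Q.[0] != 0 -> exists a, Q = Q.[0] *: (1 - 'X * a).
Proof.
have [Q' [c ->]] : exists Q' c, Q = Q' * 'X + c%:P.
  by elim/poly_ind: Q => [|Q' c _]; [exists 0, 0; rewrite mul0r addr0 | exists Q', c].
rewrite hornerMXaddC mulr0 add0r => c0; exists (- c^-1 *: Q').
rewrite scalerBr -scalerAr scalerA mulrN mulfV // scaleN1r opprK alg_polyC.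
by rewrite addrC mulrC.
Qed.

Lemma kx_constV (c : k) : kx_const c^-1 = (kx_const c)^-1.
Proof.
have [->|c0] := eqVneq c 0; first by rewrite invr0 /kx_const tofrac0 invr0.
have cF0 : kx_const c != 0 by rewrite tofrac_eq0 polyC_eq0.
by apply: (mulfI cF0); rewrite mulfV // -tofracM -polyCM mulfV // tofrac1.
Qed.

Lemma ratp_tofrac (P : {poly k}) : ratp P%:F.
Proof. by exists P, 1; rewrite hornerC oner_eq0 tofrac1 divr1. Qed.

Lemma ratp0 : ratp 0.
Proof. by rewrite -tofrac0; apply: ratp_tofrac. Qed.

Lemma ratp1 : ratp 1.
Proof. by rewrite -tofrac1; apply: ratp_tofrac. Qed.

Lemma ratpD (a b : F) : ratp a -> ratp b -> ratp (a + b).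
Proof.
move=> [P1 [Q1 [Q10 ->]]] [P2 [Q2 [Q20 ->]]].
exists (P1 * Q2 + P2 * Q1), (Q1 * Q2); rewrite hornerM mulf_neq0 //.
by split=> //; rewrite tofracD !tofracM addf_div ?tofrac_horner0_neq0.
Qed.

Lemma ratpM (a b : F) : ratp a -> ratp b -> ratp (a * b).
Proof.
move=> [P1 [Q1 [Q10 ->]]] [P2 [Q2 [Q20 ->]]].
exists (P1 * P2), (Q1 * Q2); rewrite hornerM mulf_neq0 //.
by split=> //; rewrite !tofracM mulf_div.
Qed.

Lemma ratp_sum (I : finType) (f : I -> F) : (forall i, ratp (f i)) -> ratp (\sum_i f i).
Proof. by move=> rf; apply: (big_ind ratp) => //; [exact: ratp0 | exact: ratpD]. Qed.

(* [1 - x P / Q = (Q - X P) / Q], and [Q - X P] has the constant term of [Q]. *)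
Lemma ratp_feedback (a : F) : ratp a -> 1 - x * a != 0 /\ ratp (1 - x * a)^-1.
Proof.
move=> [P [Q [Q0 ->]]].
have D0 : (Q - 'X * P).[0] != 0.
  by rewrite hornerD hornerN hornerM hornerX mul0r subr0.
have eD : 1 - x * (P%:F / Q%:F) = (Q - 'X * P)%:F / Q%:F.
  by rewrite tofracB tofracM mulrBl divff ?tofrac_horner0_neq0 // mulrA.
rewrite eD mulf_neq0 ?invr_eq0 ?tofrac_horner0_neq0 //; split=> //.
by exists Q, (Q - 'X * P); rewrite invf_div.
Qed.

End RationalFractions.

Arguments ratp0 {k}.
Arguments ratp1 {k}.

Section RationalMatrices.
Variable k : fieldType.
Local Notation F := (kx k).
Local Notation ratp := (@ratp k).

Definition rat_mx m n (A : 'M[F]_(m, n)) := forall i j, ratp (A i j).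

Lemma rat_mx0 m n : rat_mx (0 : 'M[F]_(m, n)).
Proof. by move=> i j; rewrite mxE; apply: ratp0. Qed.

Lemma rat_mx_const m n a : ratp a -> rat_mx (const_mx a : 'M[F]_(m, n)).
Proof. by move=> ra i j; rewrite mxE. Qed.

Lemma rat_mx_scalar n a : ratp a -> rat_mx (a%:M : 'M[F]_n).
Proof. by move=> ra i j; rewrite mxE; case: (i == j); [|exact: ratp0]. Qed.

Lemma rat_mx1 n : rat_mx (1%:M : 'M[F]_n).
Proof. exact: rat_mx_scalar ratp1. Qed.

Lemma rat_mxD m n (A B : 'M[F]_(m, n)) : rat_mx A -> rat_mx B -> rat_mx (A + B).
Proof. by move=> rA rB i j; rewrite mxE; apply: ratpD. Qed.

Lemma rat_mxZ m n a (A : 'M[F]_(m, n)) : ratp a -> rat_mx A -> rat_mx (a *: A).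
Proof. by move=> ra rA i j; rewrite mxE; apply: ratpM. Qed.

Lemma rat_mxM m n l (A : 'M[F]_(m, n)) (B : 'M[F]_(n, l)) :
  rat_mx A -> rat_mx B -> rat_mx (A *m B).
Proof. by move=> rA rB i j; rewrite mxE; apply: ratp_sum => t; apply: ratpM. Qed.

Lemma rat_col_mx m1 m2 n (A : 'M[F]_(m1, n)) (B : 'M[F]_(m2, n)) :
  rat_mx A -> rat_mx B -> rat_mx (col_mx A B).
Proof. by move=> rA rB i j; rewrite mxE; case: split. Qed.

Lemma rat_row_mx m n1 n2 (A : 'M[F]_(m, n1)) (B : 'M[F]_(m, n2)) :
  rat_mx A -> rat_mx B -> rat_mx (row_mx A B).
Proof. by move=> rA rB i j; rewrite mxE; case: split. Qed.

Lemma rat_usubmx m1 m2 n (A : 'M[F]_(m1 + m2, n)) : rat_mx A -> rat_mx (usubmx A).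
Proof. by move=> rA i j; rewrite mxE. Qed.

Lemma rat_dsubmx m1 m2 n (A : 'M[F]_(m1 + m2, n)) : rat_mx A -> rat_mx (dsubmx A).
Proof. by move=> rA i j; rewrite mxE. Qed.

Lemma rat_lsubmx m n1 n2 (A : 'M[F]_(m, n1 + n2)) : rat_mx A -> rat_mx (lsubmx A).
Proof. by move=> rA i j; rewrite mxE. Qed.

Lemma rat_rsubmx m n1 n2 (A : 'M[F]_(m, n1 + n2)) : rat_mx A -> rat_mx (rsubmx A).
Proof. by move=> rA i j; rewrite mxE. Qed.

End RationalMatrices.

Arguments rat_mx0 {k m n}.
Arguments rat_mx1 {k n}.

Section Semantics.
Variable k : fieldType.
Local Notation F := (kx k).
Local Notation x := (kx_x k).

Lemma sem_copy (p : 'cV[F]_1) (q : 'cV[F]_(1 + 1)) : sem Copy p q <-> q = col_mx p p.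
Proof. by rewrite /= /rel_copy col_mx_cV1. Qed.

Lemma sem_add (p : 'cV[F]_(1 + 1)) (q : 'cV[F]_1) :
  sem Add p q <-> q = usubmx p + dsubmx p.
Proof.
rewrite /= /rel_add; suff -> : const_mx (p 0 0 + p ord_max 0) = usubmx p + dsubmx p by [].
by apply/cV1P; rewrite !mxE; congr (p _ _ + p _ _); apply: val_inj.
Qed.

Lemma sem_sw (p q : 'cV[F]_(1 + 1)) : sem Sw p q <-> q = col_mx (dsubmx p) (usubmx p).
Proof.
rewrite /= /rel_sw; suff -> : \col_i p (rev_ord i) 0 = col_mx (dsubmx p) (usubmx p) by [].
apply/matrixP => i j; rewrite !ord1 !mxE.
by case: splitP => l; rewrite !mxE !ord1 => il; congr (p _ _); apply: val_inj;
  case: i il => [[|[]]].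
Qed.

Lemma sem_castc n m n' m' (en : n = n') (em : m = m') (c : circ k n m) p q :
  sem (castc en em c) p q <->
  sem c (castmx (esym en, erefl) p) (castmx (esym em, erefl) q).
Proof. by case: n' / en p; case: m' / em q => q p; rewrite !castmx_id. Qed.

Lemma sem_par n1 m1 n2 m2 (c : circ k n1 m1) (d : circ k n2 m2) p q :
  sem (Par c d) p q <-> sem c (usubmx p) (usubmx q) /\ sem d (dsubmx p) (dsubmx q).
Proof. by []. Qed.

Lemma sem_idn n (p q : 'cV[F]_n) : sem (idn k n) p q <-> p = q.
Proof.
elim: n p q => [|n IHn] p q //=; rewrite IHn.
split=> [[pq1 pq2]|->//].
by rewrite -[p](@vsubmxK _ 1 n) -[q](@vsubmxK _ 1 n) pq1 pq2.
Qed.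

Lemma sem_cup (e : 'cV[F]_0) (b : 'cV[F]_2) :
  sem cup e b <-> exists t : 'cV_1, b = col_mx t t.
Proof.
split=> [[y [_ ->]]|[t ->]]; first by exists y; rewrite col_mx_cV1.
by exists t; rewrite /= /rel_copy col_mx_cV1.
Qed.

Lemma sem_cap (u v : 'cV[F]_1) (e : 'cV[F]_0) : sem cap (col_mx u v) e <-> u = v.
Proof.
split=> [[y [/= uvy _]]|->]; last by exists v; rewrite /= /rel_copy col_mx_cV1.
by move: uvy; rewrite /rel_copy -col_mx_cV1 => /(@eq_col_mx F 1 1 1) [-> ->].
Qed.

Lemma sem_trace_cup n (p : 'cV[F]_n) (y : 'cV[F]_(n + 2)) :
  sem (castc (addn0 n) (erefl (n + 2)) (Par (idn k n) cup)) p y <->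
  exists t : 'cV_1, y = col_mx p (col_mx t t).
Proof.
rewrite sem_castc castmx_id sem_par sem_idn usubmx_cast_addn0 sem_cup.
split=> [[py [t dy]]|[t ->]]; first by exists t; rewrite py -dy vsubmxK.
by rewrite col_mxKu col_mxKd; split=> //; exists t.
Qed.

Lemma sem_trace_body n m (c : circ k (n + 1) (m + 1)) (p : 'cV[F]_n) (t1 t2 : 'cV[F]_1)
    (y : 'cV[F]_(m + 2)) :
  sem (castc (esym (addnA n 1 1)) (esym (addnA m 1 1)) (Par c Id1))
    (col_mx p (col_mx t1 t2)) y <->
  exists (a : 'cV[F]_m) (z : 'cV[F]_1),
    y = col_mx a (col_mx z t2) /\ sem c (col_mx p t1) (col_mx a z).
Proof.
rewrite sem_castc castmx_col_mxA sem_par col_mxKu col_mxKd.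
split=> [[cY t2Y]|[a [z [-> ca]]]]; last by rewrite castmx_col_mxA col_mxKu col_mxKd.
set Y := castmx _ y in cY t2Y.
exists (usubmx (usubmx Y)), (dsubmx (usubmx Y)); rewrite vsubmxK; split=> //.
by rewrite t2Y col_mxA !vsubmxK /Y castmx_comp castmx_id.
Qed.

Lemma sem_trace_reg m (a : 'cV[F]_m) (z t : 'cV[F]_1) (y : 'cV[F]_(m + 2)) :
  sem (Par (idn k m) (Par Reg Id1)) (col_mx a (col_mx z t)) y <->
  y = col_mx a (col_mx (x *: z) t).
Proof.
rewrite !sem_par sem_idn col_mxKu col_mxKd (@col_mxKu _ 1 1) (@col_mxKd _ 1 1) /=.
split=> [[ay [zy ty]]|->]; first by rewrite ay -zy ty !vsubmxK.
by rewrite col_mxKu col_mxKd (@col_mxKu _ 1 1) (@col_mxKd _ 1 1).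
Qed.

Lemma sem_trace_cap m (a : 'cV[F]_m) (u v : 'cV[F]_1) (q : 'cV[F]_m) :
  sem (castc (erefl (m + 2)) (addn0 m) (Par (idn k m) cap)) (col_mx a (col_mx u v)) q
  <-> q = a /\ u = v.
Proof.
rewrite sem_castc castmx_id sem_par col_mxKu col_mxKd sem_idn usubmx_cast_addn0 sem_cap.
by split=> [[-> ->]|[-> ->]].
Qed.

Lemma sem_trace n m (c : circ k (n + 1) (m + 1)) (p : 'cV[F]_n) (q : 'cV[F]_m) :
  sem (trace c) p q <-> exists z : 'cV[F]_1, sem c (col_mx p (x *: z)) (col_mx q z).
Proof.
split.
  move=> [_ [/sem_trace_cup [t ->] [_ [/sem_trace_body [a [z [-> ca]]]]]]].
  by move=> [_ [/sem_trace_reg -> /sem_trace_cap [-> xzt]]]; exists z; rewrite xzt.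
move=> [z cz]; exists (col_mx p (col_mx (x *: z) (x *: z))).
split; first by apply/sem_trace_cup; exists (x *: z).
exists (col_mx q (col_mx z (x *: z))); split; first by apply/sem_trace_body; exists q, z.
exists (col_mx q (col_mx (x *: z) (x *: z))).
by split; [apply/sem_trace_reg | apply/sem_trace_cap].
Qed.

End Semantics.

Section Soundness.
Variable k : fieldType.
Local Notation F := (kx k).
Local Notation x := (kx_x k).

Definition rat_affine n m (R : 'cV[F]_n -> 'cV[F]_m -> Prop) :=
  exists (A : 'M[F]_(m, n)) (b : 'cV[F]_m),
    rat_mx A /\ rat_mx b /\ (forall p q, R p q <-> q = A *m p + b).

Lemma rat_affine_linear n m (R : 'cV[F]_n -> 'cV[F]_m -> Prop) (A : 'M[F]_(m, n)) :
  rat_mx A -> (forall p q, R p q <-> q = A *m p) -> rat_affine R.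
Proof.
by move=> rA RA; exists A, 0; do 2!split=> //; [exact: rat_mx0 | move=> p q; rewrite addr0].
Qed.

Lemma rat_affine_copy : rat_affine (sem (@Copy k)).
Proof.
apply: (rat_affine_linear (rat_col_mx rat_mx1 rat_mx1)) => p q.
by rewrite sem_copy mul_col_mx mul1mx.
Qed.

Lemma rat_affine_add : rat_affine (sem (@Add k)).
Proof.
apply: (rat_affine_linear (rat_row_mx rat_mx1 rat_mx1)) => p q; rewrite sem_add.
by rewrite -{3}[p]vsubmxK mul_row_col !mul1mx.
Qed.

Lemma rat_affine_sw : rat_affine (sem (@Sw k)).
Proof.
pose P : 'M[F]_(1 + 1) := block_mx 0 1%:M 1%:M 0.
have rP : rat_mx P := rat_col_mx (rat_row_mx rat_mx0 rat_mx1) (rat_row_mx rat_mx1 rat_mx0).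
apply: (rat_affine_linear rP).
move=> p q; rewrite sem_sw -{3}[p]vsubmxK mul_block_col !mul0mx !mul1mx.
by rewrite add0r addr0.
Qed.

Lemma rat_affine_disc : rat_affine (sem (@Disc k)).
Proof. by apply: (rat_affine_linear (@rat_mx0 _ 0 1)) => p q; rewrite [q]flatmx0 mul0mx. Qed.

Lemma rat_affine_amp r : rat_affine (sem (@Amp k r)).
Proof.
apply: (rat_affine_linear (rat_mx_scalar (ratp_tofrac r%:P))) => p q.
by rewrite mul_scalar_mx.
Qed.

Lemma rat_affine_reg : rat_affine (sem (@Reg k)).
Proof.
apply: (rat_affine_linear (rat_mx_scalar (ratp_tofrac 'X))) => p q.
by rewrite mul_scalar_mx.
Qed.

Lemma rat_affine_zero : rat_affine (sem (@Zero k)).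
Proof. by apply: (rat_affine_linear (@rat_mx0 _ 1 0)) => p q; rewrite mul0mx. Qed.

Lemma rat_affine_one : rat_affine (sem (@One k)).
Proof.
exists 0, (const_mx 1); split; first exact: rat_mx0.
by split; [exact: rat_mx_const ratp1 | move=> p q; rewrite mul0mx add0r].
Qed.

Lemma rat_affine_id0 : rat_affine (sem (@Id0 k)).
Proof.
by apply: (rat_affine_linear (@rat_mx0 _ 0 0)) => p q; rewrite [p]flatmx0 [q]flatmx0 mul0mx.
Qed.

Lemma rat_affine_id1 : rat_affine (sem (@Id1 k)).
Proof.
apply: (rat_affine_linear (@rat_mx1 _ 1)) => p q.
by rewrite mul1mx; split=> ->.
Qed.

Lemma rat_affine_comp n m l (R1 : 'cV[F]_n -> 'cV[F]_m -> Prop)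
    (R2 : 'cV[F]_m -> 'cV[F]_l -> Prop) :
  rat_affine R1 -> rat_affine R2 -> rat_affine (fun p q => exists y, R1 p y /\ R2 y q).
Proof.
move=> [A1 [b1 [rA1 [rb1 R1E]]]] [A2 [b2 [rA2 [rb2 R2E]]]].
have compE p : A2 *m (A1 *m p + b1) + b2 = A2 *m A1 *m p + (A2 *m b1 + b2).
  by rewrite mulmxDr mulmxA addrA.
exists (A2 *m A1), (A2 *m b1 + b2); split; first exact: rat_mxM.
split; first by apply: rat_mxD => //; apply: rat_mxM.
move=> p q; split=> [[y [/R1E -> /R2E ->]]|->]; first exact: compE.
by exists (A1 *m p + b1); rewrite R1E R2E compE.
Qed.

Lemma rat_affine_par n1 m1 n2 m2 (R1 : 'cV[F]_n1 -> 'cV[F]_m1 -> Prop)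
    (R2 : 'cV[F]_n2 -> 'cV[F]_m2 -> Prop) :
  rat_affine R1 -> rat_affine R2 ->
  rat_affine (fun p q => R1 (usubmx p) (usubmx q) /\ R2 (dsubmx p) (dsubmx q)).
Proof.
move=> [A1 [b1 [rA1 [rb1 R1E]]]] [A2 [b2 [rA2 [rb2 R2E]]]].
exists (block_mx A1 0 0 A2), (col_mx b1 b2); split.
  by apply: rat_col_mx; apply: rat_row_mx => //; apply: rat_mx0.
split; first exact: rat_col_mx.
move=> p q; rewrite R1E R2E.
have -> : block_mx A1 0 0 A2 *m p + col_mx b1 b2 =
    col_mx (A1 *m usubmx p + b1) (A2 *m dsubmx p + b2).
  by rewrite -{1}[p]vsubmxK mul_block_col !mul0mx addr0 add0r add_col_mx.
split=> [[<- <-]|->]; first by rewrite vsubmxK.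
by rewrite col_mxKu col_mxKd.
Qed.

(* Eliminating the fed-back wire [z = w + x a z] leaves the loop gain
   [s = x (1 - x a)^-1] in front of [A12]. *)
Lemma rat_affine_trace n m (c : circ k (n + 1) (m + 1)) :
  rat_affine (sem c) -> rat_affine (sem (trace c)).
Proof.
move=> [A [b [rA [rb cE]]]].
set A11 := ulsubmx A; set A12 := ursubmx A; set A21 := dlsubmx A; set a : F := drsubmx A 0 0.
set b1 := usubmx b; set b2 := dsubmx b.
have ra : ratp a := rat_rsubmx (rat_dsubmx rA) 0 0.
have [nz rinv] := ratp_feedback ra.
set s := x * (1 - x * a)^-1.
have rs : ratp s := ratpM (ratp_tofrac 'X) rinv.
exists (A11 + s *: (A12 *m A21)), (b1 + s *: (A12 *m b2)); split; [|split].
- apply: rat_mxD (rat_lsubmx (rat_usubmx rA)) (rat_mxZ rs _).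
  exact: rat_mxM (rat_rsubmx (rat_usubmx rA)) (rat_lsubmx (rat_dsubmx rA)).
- apply: rat_mxD (rat_usubmx rb) (rat_mxZ rs _).
  exact: rat_mxM (rat_rsubmx (rat_usubmx rA)) (rat_dsubmx rb).
move=> p q; rewrite sem_trace.
set w : F := (A21 *m p + b2) 0 0.
have blockE (z : 'cV[F]_1) : col_mx q z = A *m col_mx p (x *: z) + b <->
    q = A11 *m p + (x * z 0 0) *: A12 + b1 /\ z 0 0 = w + x * a * z 0 0.
  rewrite -{1}[A]submxK -{1}[b]vsubmxK mul_block_col add_col_mx !mulmx_cV1.
  rewrite -/A11 -/A12 -/A21 -/b1 -/b2 [(x *: z) 0 0]mxE.
  split=> [/(@eq_col_mx _ m 1 1) [-> /cV1P zE]|[-> zE]].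
    by split=> //; rewrite {1}zE /w /a !mxE addrAC mulrAC.
  by congr col_mx; apply/cV1P; rewrite {1}zE /w /a !mxE addrAC mulrAC.
have gainE : A11 *m p + (s * w) *: A12 + b1 =
    (A11 + s *: (A12 *m A21)) *m p + (b1 + s *: (A12 *m b2)).
  rewrite mulmxDl -scalemxAl -mulmxA !mulmx_cV1 -scalerA /w mxE.
  by rewrite scalerDl scalerDr (addrC b1) !addrA.
split=> [[z /cE /blockE [-> /(feedbackP nz) ->]]|qE].
  by rewrite mulrA gainE.
exists (const_mx ((1 - x * a)^-1 * w)); apply/cE/blockE; rewrite mxE qE.
by split; [rewrite mulrA gainE | apply/feedbackP].
Qed.

Lemma asfg_rat_affine n m (g : circ k n m) : asfg g -> rat_affine (sem g).
Proof.
elim=> {n m g}.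
- exact: rat_affine_copy.
- exact: rat_affine_disc.
- exact: rat_affine_amp.
- exact: rat_affine_reg.
- exact: rat_affine_add.
- exact: rat_affine_zero.
- exact: rat_affine_one.
- exact: rat_affine_id0.
- exact: rat_affine_id1.
- exact: rat_affine_sw.
- by move=> n m l c d _ rc _ rd; apply: rat_affine_comp.
- by move=> n1 m1 n2 m2 c d _ rc _ rd; apply: rat_affine_par.
- by move=> n m c _; apply: rat_affine_trace.
Qed.

End Soundness.

Section Completeness.
Variable k : fieldType.
Local Notation F := (kx k).
Local Notation x := (kx_x k).

Definition realizable n m (f : 'cV[F]_n -> 'cV[F]_m) :=
  exists g : circ k n m, asfg g /\ (forall p q, sem g p q <-> q = f p).

Lemma eq_realizable n m (f f' : 'cV[F]_n -> 'cV[F]_m) :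
  realizable f -> f =1 f' -> realizable f'.
Proof. by move=> [g [ag gE]] ff'; exists g; split=> // p q; rewrite gE ff'. Qed.

Lemma realizable_comp n m l (f1 : 'cV[F]_n -> 'cV[F]_m) (f2 : 'cV[F]_m -> 'cV[F]_l) :
  realizable f1 -> realizable f2 -> realizable (f2 \o f1).
Proof.
move=> [g1 [ag1 g1E]] [g2 [ag2 g2E]]; exists (Seq g1 g2); split; first exact: asfg_seq.
move=> p q; split=> [[y [/g1E -> /g2E ->]]//|->].
by exists (f1 p); rewrite g1E g2E.
Qed.

Lemma realizable_par n1 m1 n2 m2 (f1 : 'cV[F]_n1 -> 'cV[F]_m1) (f2 : 'cV[F]_n2 -> 'cV[F]_m2) :
  realizable f1 -> realizable f2 ->
  realizable (fun p => col_mx (f1 (usubmx p)) (f2 (dsubmx p))).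
Proof.
move=> [g1 [ag1 g1E]] [g2 [ag2 g2E]]; exists (Par g1 g2); split; first exact: asfg_par.
move=> p q; rewrite sem_par g1E g2E.
by split=> [[<- <-]|->]; [rewrite vsubmxK | rewrite col_mxKu col_mxKd].
Qed.

Lemma realizable_id1 : realizable (fun p : 'cV[F]_1 => p).
Proof. by exists Id1; split; [exact: asfg_id1 | split=> ->]. Qed.

Lemma realizable_idn n : realizable (fun p : 'cV[F]_n => p).
Proof.
exists (idn k n); split; last by move=> p q; rewrite sem_idn; split=> ->.
by elim: n => [|n IHn]; [exact: asfg_id0 | exact: (asfg_par (asfg_id1 _) IHn)].
Qed.

Lemma realizable_copy : realizable (fun p : 'cV[F]_1 => col_mx p p : 'cV_(1 + 1)).
Proof. by exists Copy; split; [exact: asfg_copy | move=> p q; rewrite sem_copy]. Qed.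

Lemma realizable_add : realizable (fun v : 'cV[F]_(1 + 1) => usubmx v + dsubmx v).
Proof. by exists Add; split; [exact: asfg_add | move=> p q; rewrite sem_add]. Qed.

Lemma realizable_swap :
  realizable (fun v : 'cV[F]_(1 + 1) => col_mx (dsubmx v) (usubmx v) : 'cV_(1 + 1)).
Proof. by exists Sw; split; [exact: asfg_sw | move=> p q; rewrite sem_sw]. Qed.

Lemma realizable_amp r : realizable (fun p : 'cV[F]_1 => kx_const r *: p).
Proof. by exists (Amp r); split; [exact: asfg_amp | move=> p q]. Qed.

Lemma realizable_reg : realizable (fun p : 'cV[F]_1 => x *: p).
Proof. by exists Reg; split; [exact: asfg_reg | move=> p q]. Qed.

Lemma realizable_one : realizable (fun _ : 'cV[F]_0 => const_mx 1 : 'cV_1).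
Proof. by exists One; split; [exact: asfg_one | move=> p q]. Qed.

Lemma realizable_scale0 : realizable (fun p : 'cV[F]_1 => 0 *: p).
Proof.
exists (Seq Disc Zero); split; first by apply: asfg_seq; constructor.
move=> p q; rewrite scale0r; split=> [[y [_ ->]]//|->].
by exists 0.
Qed.

Lemma realizable_lincomb (r s : F) :
  realizable (fun p : 'cV[F]_1 => r *: p) -> realizable (fun p : 'cV[F]_1 => s *: p) ->
  realizable (fun v : 'cV[F]_(1 + 1) => r *: usubmx v + s *: dsubmx v).
Proof.
move=> rr rs; apply: (eq_realizable (realizable_comp (realizable_par rr rs) realizable_add)).
by move=> v /=; rewrite (@col_mxKu _ 1 1) (@col_mxKd _ 1 1).
Qed.

Lemma realizable_scaleD (r s : F) :
  realizable (fun p : 'cV[F]_1 => r *: p) -> realizable (fun p : 'cV[F]_1 => s *: p) ->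
  realizable (fun p : 'cV[F]_1 => (r + s) *: p).
Proof.
move=> rr rs.
apply: (eq_realizable (realizable_comp realizable_copy (realizable_lincomb rr rs))).
by move=> p /=; rewrite (@col_mxKu _ 1 1) (@col_mxKd _ 1 1) scalerDl.
Qed.

Lemma realizable_scaleM (r s : F) :
  realizable (fun p : 'cV[F]_1 => r *: p) -> realizable (fun p : 'cV[F]_1 => s *: p) ->
  realizable (fun p : 'cV[F]_1 => (r * s) *: p).
Proof.
by move=> rr rs; apply: (eq_realizable (realizable_comp rs rr)) => p /=; rewrite scalerA.
Qed.

Lemma realizable_scale_poly (P : {poly k}) : realizable (fun p : 'cV[F]_1 => P%:F *: p).
Proof.
elim/poly_ind: P => [|P c IHP]; first by rewrite tofrac0; exact: realizable_scale0.
rewrite tofracD tofracM.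
exact: realizable_scaleD (realizable_scaleM IHP realizable_reg) (realizable_amp c).
Qed.

(* Closing the body [(p, y) |-> (u p + a y, u p + a y)] by the trace forces
   [q = u p + a (x q)], whose unique solution is [q = (1 - x a)^-1 u p]. *)
Lemma realizable_scale_feedback (u a : F) : 1 - x * a != 0 ->
  realizable (fun p : 'cV[F]_1 => u *: p) -> realizable (fun p : 'cV[F]_1 => a *: p) ->
  realizable (fun p : 'cV[F]_1 => ((1 - x * a)^-1 * u) *: p).
Proof.
move=> nz ru ra.
have [g [ag gE]] := realizable_comp (realizable_lincomb ru ra) realizable_copy.
have loopE (p q : 'cV[F]_1) :
    q = u *: p + a *: (x *: q) <-> q 0 0 = u * p 0 0 + x * a * q 0 0.
  by rewrite cV1P !mxE mulrA (mulrC a).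
exists (@trace k 1 1 g); split; first exact: asfg_tr.
move=> p q; rewrite sem_trace; split=> [[z]|qE].
  rewrite gE /= (@col_mxKu _ 1 1) (@col_mxKd _ 1 1) => /(@eq_col_mx _ 1 1 1) [-> zE].
  by rewrite -zE; apply/cV1P; rewrite mxE -mulrA; apply/(feedbackP nz)/loopE.
exists q; rewrite gE /= (@col_mxKu _ 1 1) (@col_mxKd _ 1 1).
suff <- : q = u *: p + a *: (x *: q) by [].
by apply/loopE/(feedbackP nz); rewrite qE mxE mulrA.
Qed.

Lemma realizable_scale_inv (Q : {poly k}) : Q.[0] != 0 ->
  realizable (fun p : 'cV[F]_1 => (Q%:F)^-1 *: p).
Proof.
move=> Q0; have [a QE] := horner0_factor Q0.
have QF : Q%:F = (1 - x * a%:F) * kx_const Q.[0].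
  by rewrite {1}QE -mul_polyC tofracM tofracB tofracM tofrac1 mulrC.
have nz : 1 - x * a%:F != 0.
  by apply: contraNneq (tofrac_horner0_neq0 Q0) => xa0; rewrite QF xa0 mul0r.
apply: (eq_realizable (realizable_scale_feedback nz (realizable_amp Q.[0]^-1)
  (realizable_scale_poly a))).
by move=> p; rewrite QF invfM kx_constV.
Qed.

Lemma realizable_scale_rat (r : F) : ratp r -> realizable (fun p : 'cV[F]_1 => r *: p).
Proof.
move=> [P [Q [Q0 ->]]].
exact: realizable_scaleM (realizable_scale_poly P) (realizable_scale_inv Q0).
Qed.

Lemma realizable_const m (b : 'cV[F]_m) : rat_mx b -> realizable (fun _ : 'cV[F]_0 => b).
Proof.
elim: m b => [|m IHm] b rb.
  by exists Id0; split=> [|p q]; [exact: asfg_id0 | rewrite [p]flatmx0 [q]flatmx0 [b]flatmx0].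
have rb0 : realizable (fun _ : 'cV[F]_0 => usubmx (b : 'cV_(1 + m))).
  have r0 := @rat_usubmx _ 1 m 1 b rb 0 0.
  apply: (eq_realizable (realizable_comp realizable_one (realizable_scale_rat r0))).
  by move=> p; apply/cV1P; rewrite !mxE mulr1.
apply: (eq_realizable (realizable_par rb0 (IHm _ (@rat_dsubmx _ 1 m 1 b rb)))).
by move=> p; rewrite vsubmxK.
Qed.

Lemma realizable_shear (r : F) : ratp r ->
  realizable (fun v : 'cV[F]_(1 + 1) => col_mx (usubmx v) (r *: usubmx v + dsubmx v)).
Proof.
move=> rr; have r1 := eq_realizable realizable_id1 (fun p => esym (scale1r p)).
apply: (eq_realizable (realizable_comp (realizable_par realizable_copy realizable_id1)
  (realizable_par realizable_id1 (realizable_lincomb (realizable_scale_rat rr) r1)))).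
move=> v /=; rewrite col_mx1A col_mxKu col_mxKd.
by rewrite (@col_mxKu _ 1 1) (@col_mxKd _ 1 1) scale1r.
Qed.

Lemma realizable_add_scaled m (a : 'cV[F]_m) : rat_mx a ->
  realizable (fun v : 'cV[F]_(1 + m) => usubmx v 0 0 *: a + dsubmx v).
Proof.
elim: m a => [|m IHm] a ra.
  by exists Disc; split=> [|p q]; [exact: asfg_disc | rewrite [q]flatmx0 [RHS]flatmx0].
pose a0 := usubmx (a : 'cV_(1 + m)); pose a' := dsubmx (a : 'cV_(1 + m)).
have ra0 : ratp (a0 0 0) := @rat_usubmx _ 1 m 1 a ra 0 0.
apply: (eq_realizable (realizable_comp
  (realizable_par (realizable_shear ra0) (realizable_idn m))
  (realizable_comp (realizable_par realizable_swap (realizable_idn m))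
     (realizable_par realizable_id1 (IHm a' (@rat_dsubmx _ 1 m 1 a ra)))))).
move=> v /=; rewrite -[v](@vsubmxK _ (1 + 1) m) -[usubmx v](@vsubmxK _ 1 1).
move: (usubmx (usubmx v)) (dsubmx (usubmx v)) (dsubmx v) => u w0 w.
rewrite !(@col_mxKu _ (1 + 1) m) !(@col_mxKd _ (1 + 1) m).
rewrite !(@col_mxKu _ 1 1) !(@col_mxKd _ 1 1).
rewrite !col_mx1A !(@col_mxKu _ 1 (1 + m)) !(@col_mxKd _ 1 (1 + m)).
rewrite (@col_mxKu _ 1 m) (@col_mxKd _ 1 m).
rewrite -[a](@vsubmxK _ 1 m) -/a0 -/a' (@scale_col_mx _ 1 m) (@add_col_mx _ 1 m); congr col_mx.
by apply/cV1P; rewrite !mxE mulrC.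
Qed.

Lemma realizable_affine n m (A : 'M[F]_(m, n)) (b : 'cV[F]_m) :
  rat_mx A -> rat_mx b -> realizable (fun p => A *m p + b).
Proof.
elim: n A => [|n IHn] A rA rb.
  by apply: (eq_realizable (realizable_const rb)) => p; rewrite [p]flatmx0 mulmx0 add0r.
pose a := lsubmx (A : 'M_(m, 1 + n)); pose A' := rsubmx (A : 'M_(m, 1 + n)).
apply: (eq_realizable (realizable_comp
  (realizable_par realizable_id1 (IHn A' (@rat_rsubmx _ m 1 n A rA) rb))
  (realizable_add_scaled (@rat_lsubmx _ m 1 n A rA)))).
move=> p /=; rewrite (@col_mxKu _ 1 m) (@col_mxKd _ 1 m) addrA -mulmx_cV1.
by rewrite -mul_row_col hsubmxK vsubmxK.
Qed.

End Completeness.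

Theorem proposition11 (k : fieldType) (n m : nat) (c : circ k n m) :
  (exists (A : 'M[kx k]_(m, n)) (b : 'cV[kx k]_m),
      (forall i j, ratp (A i j)) /\ (forall i j, ratp (b i j)) /\
      (forall p q, sem c p q <-> q = A *m p + b))
  <->
  (exists g : circ k n m, asfg g /\ (forall p q, sem g p q <-> sem c p q)).
Proof.
split=> [[A [b [rA [rb cE]]]] | [g [ag gc]]].
  have [g [ag gE]] := realizable_affine rA rb.
  by exists g; split=> // p q; rewrite gE cE.
have [A [b [rA [rb gE]]]] := asfg_rat_affine ag.
by exists A, b; do 2!split=> //; move=> p q; rewrite -gc gE.
Qed.
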